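(* Let $a\in\mathrm{F}^\uparrow$ with $\mathrm{supp}(a)=(0,r)$, let $\alpha_0\in(0,r)\cap A$, set $\alpha_k=(\alpha_0)a^k$ ($k\in\mathbb Z$), and let $b\in\mathrm{F}^\uparrow$ with $\mathrm{supp}(b)=(\alpha_0,\alpha_1)$. Let $d$ be a generator of the (cyclic) centralizer of $b$ in $\mathrm{F}_{(\alpha_0,\alpha_1)}$. Then the centralizer of the set $\{a^{-k}ba^k\mid k\in\mathbb Z\}$ in $\mathrm{F}$ is the subgroup generated by $\{a^{-k}da^k\mid k\in\mathbb Z\}$.
   Context: Fix an admissible triple $(r,\Lambda,A)$: $r>0$, $\Lambda\le\mathbb R^*_+$ a nontrivial multiplicative subgroup, $A\subseteq\mathbb R$ an additive subgroup with $r\in A$ and $\Lambda A\subseteq A$. $\mathrm{F}=\mathrm{F}(r,\Lambda,A)$ is the group of homeomorphisms of $[0,r)$ that are piecewise affine with finitely many breakpoints, all slopes in $\Lambda$, breakpoints and their images in $A$; maps act on the right. $\mathrm{F}^\uparrow=\{x\in\mathrm{F}\mid(t)x\ge t\ \forall t\}$; $\mathrm{supp}(x)$ is the set of non-fixed points; $\mathrm{F}_S=\{x\in\mathrm{F}\mid\mathrm{supp}(x)\subseteq S\}$. *)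

From Stdlib Require Import Reals.
Open Scope R_scope.

Definition admissible (r : R) (Lam A : R -> Prop) : Prop :=
  0 < r /\
  (forall l, Lam l -> 0 < l) /\ Lam 1 /\
  (forall l m, Lam l -> Lam m -> Lam (l * m)) /\
  (forall l, Lam l -> Lam (/ l)) /\
  (exists l, Lam l /\ l <> 1) /\
  A 0 /\ (forall x y, A x -> A y -> A (x + y)) /\ (forall x, A x -> A (- x)) /\
  A r /\ (forall l x, Lam l -> A x -> A (l * x)).

Definition I0r (r t : R) : Prop := 0 <= t < r.

Definition cont_on (D : R -> Prop) (f : R -> R) : Prop :=
  forall x, D x -> forall eps, 0 < eps -> exists delta, 0 < delta /\
    forall y, D y -> Rabs (y - x) < delta -> Rabs (f y - f x) < eps.

(* Elements of F(r,Lam,A) are represented as functions R -> R, equal to the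
   identity outside [0,r).  Maps act on the right: (t)(xy) = ((t)x)y, i.e. the
   product xy is the function  fun t => y (x t). *)
Definition inF (r : R) (Lam A : R -> Prop) (f : R -> R) : Prop :=
  (forall t, ~ I0r r t -> f t = t) /\
  (exists g : R -> R,
     (forall t, I0r r t -> I0r r (f t) /\ I0r r (g t) /\ g (f t) = t /\ f (g t) = t)
     /\ cont_on (I0r r) f /\ cont_on (I0r r) g) /\
  (exists (n : nat) (p lam c : nat -> R),
     p 0%nat = 0 /\ p n = r /\
     (forall i, (i < n)%nat -> p i < p (S i)) /\
     (forall i, (i < n)%nat -> A (p i) /\ A (f (p i)) /\ Lam (lam i)) /\
     (forall i t, (i < n)%nat -> p i <= t < p (S i) -> f t = lam i * t + c i)).

Definition inFup (r : R) (Lam A : R -> Prop) (f : R -> R) : Prop :=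
  inF r Lam A f /\ forall t, I0r r t -> t <= f t.

Definition supp (r : R) (f : R -> R) (t : R) : Prop := I0r r t /\ f t <> t.

Definition commute (x y : R -> R) : Prop := forall t, x (y t) = y (x t).

Inductive gen (S : (R -> R) -> Prop) : (R -> R) -> Prop :=
| gen_id : gen S (fun t => t)
| gen_base : forall g, S g -> gen S g
| gen_mul : forall g h, gen S g -> gen S h -> gen S (fun t => h (g t))
| gen_inv : forall g h, gen S g -> (forall t, h (g t) = t /\ g (h t) = t) -> gen S h
| gen_ext : forall g h, gen S g -> (forall t, h t = g t) -> gen S h.

(* conjset a b g  <->  g = a^{-k} b a^k for some integer k (right action):
   for k = n >= 0:  (t a^n) g = (t b) a^n ;  for k = -n:  (t g) a^n = (t a^n) b *)
Definition conjset (a b : R -> R) (g : R -> R) : Prop :=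
  exists n : nat,
    (forall t, g (Nat.iter n a t) = Nat.iter n a (b t)) \/
    (forall t, Nat.iter n a (g t) = b (Nat.iter n a t)).

(* Write b_k = a^{-k} b a^k; its support is (alpha_k, alpha_{k+1}) and these
   intervals tile (0,r), accumulating at 0 and at r.
   - The conjugates of d commute with every b_k (same index: conjugate
     [commute d b]; different indices: disjoint supports), so the subgroup
     they generate lies in the centralizer.
   - Conversely, an x in F commuting with every b_k fixes every alpha_k
     (a map commuting with b_k preserves its support).  Its restriction to
     [alpha_k, alpha_{k+1}] is conjugate by a^k to an element of the
     centralizer of b in F_(alpha0, alpha1), i.e. to a power of d.  Since x
     is affine near 0 and near r and fixes infinitely many orbit points
     there, it is the identity near both ends, so x is a finite product of
     these restrictions. *)

From Stdlib Require Import Reals Lra Lia List Classical ClassicalEpsilon ZArith.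
Open Scope R_scope.

Definition increasing (f : R -> R) : Prop := forall s t, s < t -> f s < f t.

Lemma incr_le f s t : increasing f -> s <= t -> f s <= f t.
Proof. intros Hf Hst. destruct (Req_dec s t) as [->|]; [lra|]. left; apply Hf; lra. Qed.

Lemma incr_lt_rev f s t : increasing f -> f s < f t -> s < t.
Proof.
  intros Hf Hst. destruct (Rlt_dec s t) as [|Hn]; [auto|].
  assert (f t <= f s) by (apply incr_le; auto; lra). lra.
Qed.

Lemma incr_inj f s t : increasing f -> f s = f t -> s = t.
Proof.
  intros Hf E. destruct (Rtotal_order s t) as [h|[h|h]]; auto; apply Hf in h; lra.
Qed.

Lemma incr_between f u v t : increasing f -> f u = u -> f v = v -> u < t < v -> u < f t < v.
Proof. intros Hf Hu Hv Ht. rewrite <- Hu at 1. rewrite <- Hv. split; apply Hf; lra. Qed.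

Lemma incr_surj_cont (D : R -> Prop) f :
  increasing f -> (forall s, exists t, f t = s) -> cont_on D f.
Proof.
  intros Hf Hs x _ eps He.
  destruct (Hs (f x - eps)) as [y1 E1], (Hs (f x + eps)) as [y2 E2].
  assert (y1 < x) by (apply (incr_lt_rev f); auto; lra).
  assert (x < y2) by (apply (incr_lt_rev f); auto; lra).
  exists (Rmin (x - y1) (y2 - x)). split; [apply Rmin_pos; lra|].
  intros y _ Hy. apply Rabs_def2 in Hy as [Hy1 Hy2].
  pose proof (Rmin_l (x - y1) (y2 - x)). pose proof (Rmin_r (x - y1) (y2 - x)).
  assert (f y < f y2) by (apply Hf; lra). assert (f y1 < f y) by (apply Hf; lra).
  apply Rabs_def1; lra.
Qed.

Lemma cont_affine_right (D : R -> Prop) f l c p t :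
  cont_on D f -> D t -> p < t -> (forall s, p <= s < t -> D s /\ f s = l * s + c) ->
  f t = l * t + c.
Proof.
  intros Hc Dt Hpt Haff. apply NNPP. intro Hne.
  set (gap := Rabs (f t - (l * t + c))).
  assert (Hgap : 0 < gap) by (apply Rabs_pos_lt; lra).
  destruct (Hc t Dt (gap / 2)) as [delta [Hdelta Hclose]]; [lra|].
  set (h := Rmin (Rmin (delta / 2) (t - p)) (gap / (4 * (Rabs l + 1)))).
  assert (Hl := Rabs_pos l).
  assert (hpos : 0 < h).
  { unfold h. repeat apply Rmin_pos; try lra. apply Rdiv_lt_0_compat; lra. }
  assert (h1 : h <= delta / 2) by (unfold h; eapply Rle_trans; [apply Rmin_l|apply Rmin_l]).
  assert (h2 : h <= t - p) by (unfold h; eapply Rle_trans; [apply Rmin_l|apply Rmin_r]).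
  assert (h3 : (Rabs l + 1) * h <= gap / 4).
  { unfold h. apply (Rle_trans _ ((Rabs l + 1) * (gap / (4 * (Rabs l + 1))))).
    - apply Rmult_le_compat_l; [lra|apply Rmin_r].
    - right. field. lra. }
  destruct (Haff (t - h)) as [Ds Es]; [lra|].
  assert (Hfs := Hclose (t - h) Ds ltac:(rewrite Rabs_left; lra)).
  rewrite Es in Hfs. apply Rabs_def2 in Hfs.
  assert (Hlh : Rabs (l * h) <= gap / 4) by (rewrite Rabs_mult, (Rabs_right h) by lra; nra).
  pose proof (Rle_abs (l * h)). pose proof (Rle_abs (- (l * h))). rewrite Rabs_Ropp in *.
  assert (gap = f t - (l * t + c) \/ gap = - (f t - (l * t + c))) as [E|E].
  { unfold gap. destruct (Rcase_abs (f t - (l * t + c))); [right|left].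
    - apply Rabs_left; auto.
    - apply Rabs_right; auto. }
  all: lra.
Qed.

Lemma affine_two_fixed f l c u v p q : u <= p < q -> q < v ->
  (forall t, u <= t < v -> f t = l * t + c) -> f p = p -> f q = q ->
  forall t, u <= t < v -> f t = t.
Proof.
  intros Hp Hq Haff Fp Fq t Ht.
  rewrite Haff in Fp, Fq by lra.
  assert (l = 1) by (apply (Rmult_eq_reg_r (q - p)); lra).
  subst l. rewrite Haff by auto. lra.
Qed.

(* A sequence x with x n = h (x (n+1)), h increasing and h t > t on [e, x 0],
   eventually drops below e (otherwise its infimum m would satisfy h m <= m). *)
Lemma orbit_drops_below (h : R -> R) (x : nat -> R) (e : R) : increasing h ->
  (forall n, x n = h (x (S n))) -> (forall t, e <= t <= x 0%nat -> t < h t) ->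
  exists n, x n < e.
Proof.
  intros Hh Hx Hup. apply NNPP. intro Hn.
  assert (Hge : forall n, e <= x n) by (intro n; apply Rnot_lt_le; intro; apply Hn; eauto).
  destruct (completeness (fun y => exists n, y = - x n)) as [M [Hub Hlub]];
    [exists (- e); intros y [n ->]; specialize (Hge n); lra | exists (- x 0%nat), 0%nat; auto |].
  assert (HM1 : M <= - e) by (apply Hlub; intros y [n ->]; specialize (Hge n); lra).
  assert (HM2 : - x 0%nat <= M) by (apply Hub; exists 0%nat; auto).
  assert (Hinf : M <= - h (- M)).
  { apply Hlub. intros y [n ->]. rewrite Hx.
    assert (- x (S n) <= M) by (apply Hub; exists (S n); auto).
    assert (h (- M) <= h (x (S n))) by (apply incr_le; auto; lra). lra. }
  assert (- M < h (- M)) by (apply Hup; lra). lra.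
Qed.

Section Grid.
Variable r : R.

Definition grid (n : nat) (p : nat -> R) : Prop :=
  p 0%nat = 0 /\ p n = r /\ forall i, (i < n)%nat -> p i < p (S i).

Definition is_node (n : nat) (p : nat -> R) (q : R) : Prop :=
  exists i, (i <= n)%nat /\ p i = q.

Lemma grid_le n p i j : grid n p -> (i <= j <= n)%nat -> p i <= p j.
Proof.
  intros (_ & _ & Hp) Hij. induction j as [|j IH].
  - replace i with 0%nat by lia. lra.
  - destruct (Nat.eq_dec i (S j)) as [->|]; [lra|].
    assert (p i <= p j) by (apply IH; lia). assert (p j < p (S j)) by (apply Hp; lia). lra.
Qed.

Lemma grid_range n p i : grid n p -> (i <= n)%nat -> 0 <= p i <= r.
Proof.
  intros Hg Hi. pose proof Hg as (p0 & pn & _). rewrite <- p0, <- pn at 1.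
  split; apply (grid_le n); auto; lia.
Qed.

Lemma grid_locate n p t : grid n p -> 0 <= t < r ->
  exists i, (i < n)%nat /\ p i <= t < p (S i).
Proof.
  intros Hg Ht. pose proof Hg as (p0 & pn & _).
  assert (Hm : forall m, (m <= n)%nat -> t < p m -> exists i, (i < m)%nat /\ p i <= t < p (S i)).
  { induction m as [|m IH]; intros Hm Htm; [lra|].
    destruct (Rlt_dec t (p m)) as [Hlt|Hge].
    - destruct (IH ltac:(lia) Hlt) as [i [? ?]]. exists i. split; [lia|auto].
    - exists m. split; [lia|lra]. }
  apply (Hm n); [lia|lra].
Qed.

Lemma grid_insert n p q : grid n p -> 0 < q < r -> ~ is_node n p q ->
  exists p', grid (S n) p' /\ is_node (S n) p' q /\
    (forall x, is_node n p x -> is_node (S n) p' x) /\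
    (forall x, is_node (S n) p' x -> x = q \/ is_node n p x).
Proof.
  intros Hg Hq Hnq. pose proof Hg as (p0 & pn & pinc).
  destruct (grid_locate n p q Hg ltac:(lra)) as [i [Hi [Hpi Hqi]]].
  assert (Hpi' : p i < q).
  { destruct (Req_dec (p i) q) as [E|]; [|lra]. exfalso. apply Hnq. exists i. split; [lia|auto]. }
  set (p' := fun j => if (j <=? i)%nat then p j else if (j =? S i)%nat then q else p (pred j)).
  assert (Elow : forall j, (j <= i)%nat -> p' j = p j).
  { intros j Hj. unfold p'. destruct (Nat.leb_spec j i); [auto|lia]. }
  assert (Emid : p' (S i) = q).
  { unfold p'. destruct (Nat.leb_spec (S i) i); [lia|]. now rewrite Nat.eqb_refl. }
  assert (Ehigh : forall j, (S i < j)%nat -> p' j = p (pred j)).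
  { intros j Hj. unfold p'. destruct (Nat.leb_spec j i); [lia|].
    destruct (Nat.eqb_spec j (S i)); [lia|auto]. }
  exists p'. split; [|split; [|split]].
  - split; [|split].
    + now rewrite Elow by lia.
    + rewrite Ehigh by lia. auto.
    + intros j Hj. destruct (Nat.lt_total (S j) (S i)) as [h|[h|h]].
      * rewrite !Elow by lia. apply pinc; lia.
      * replace j with i by lia. rewrite Elow, Emid by lia. auto.
      * destruct (Nat.eq_dec j (S i)) as [->|Hne].
        -- rewrite Emid, Ehigh by lia. auto.
        -- rewrite !Ehigh by lia. destruct j as [|j]; [lia|]. apply pinc; simpl; lia.
  - exists (S i). split; [lia|auto].
  - intros x [j [Hj <-]]. destruct (Nat.le_gt_cases j i).
    + exists j. split; [lia|]. apply Elow; lia.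
    + exists (S j). split; [lia|]. rewrite Ehigh by lia. auto.
  - intros x [j [Hj <-]]. destruct (Nat.lt_total j (S i)) as [h|[h|h]].
    + right. exists j. split; [lia|]. symmetry; apply Elow; lia.
    + left. subst j. auto.
    + right. exists (pred j). split; [lia|]. symmetry; apply Ehigh; lia.
Qed.

Lemma grid_refining L : 0 < r -> exists n p, grid n p /\
  (forall x, is_node n p x -> x = 0 \/ x = r \/ In x L) /\
  (forall q, In q L -> 0 < q < r -> is_node n p q).
Proof.
  intro rpos. induction L as [|q L IH].
  - exists 1%nat, (fun i => match i with O => 0 | _ => r end). split; [|split].
    + split; [reflexivity|split; [reflexivity|]]. intros i Hi. replace i with 0%nat by lia. lra.
    + intros x [[|i] [_ <-]]; auto.
    + intros q [].
  - destruct IH as [n [p [Hg [Hmem Hcov]]]].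
    destruct (classic (0 < q < r /\ ~ is_node n p q)) as [[Hq Hnq]|Hq].
    + destruct (grid_insert n p q Hg Hq Hnq) as [p' [Hg' [Hnew [Hold Hback]]]].
      exists (S n), p'. split; [auto|split].
      * intros x Hx. destruct (Hback x Hx) as [->|Hx']; [simpl; auto|].
        destruct (Hmem x Hx') as [?|[?|?]]; simpl; auto.
      * intros q' [<-|Hin] Hq'; auto.
    + exists n, p. split; [auto|split].
      * intros x Hx. destruct (Hmem x Hx) as [?|[?|?]]; simpl; auto.
      * intros q' [<-|Hin] Hq'; auto. apply NNPP. intro. auto.
Qed.

Lemma grid_affine_incr n p (lam c : nat -> R) f : grid n p ->
  (forall i, (i < n)%nat -> 0 < lam i) ->
  (forall i t, (i < n)%nat -> p i <= t <= p (S i) -> t < r -> f t = lam i * t + c i) ->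
  forall s t, 0 <= s < t -> t < r -> f s < f t.
Proof.
  intros Hg Hlam Haff.
  enough (Hm : forall m, (m <= n)%nat -> forall s t, 0 <= s < t -> t <= p m -> t < r -> f s < f t).
  { intros s t Hst Htr. apply (Hm n); auto. pose proof Hg as (_ & -> & _). lra. }
  induction m as [|m IH]; intros Hm s t Hst Htm Htr.
  { pose proof Hg as (p0 & _). lra. }
  destruct (Rle_dec t (p m)); [apply IH; auto; lia|].
  pose proof (grid_range n p m Hg ltac:(lia)). pose proof (Hlam m ltac:(lia)).
  assert (Hcell : forall x y, p m <= x < y -> y <= p (S m) -> y < r -> f x < f y).
  { intros x y Hxy Hy Hyr. rewrite !(Haff m) by (lia || lra).
    apply Rplus_lt_compat_r, Rmult_lt_compat_l; lra. }
  destruct (Rle_dec (p m) s); [apply Hcell; lra|].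
  assert (f s < f (p m)) by (apply IH; lia || lra).
  assert (f (p m) < f t) by (apply Hcell; lra). lra.
Qed.

End Grid.

Definition supported_in (f : R -> R) (u v : R) : Prop := forall t, ~ (u < t < v) -> f t = t.

Lemma disjoint_support_commute f g u v u' v' : increasing f -> increasing g ->
  supported_in f u v -> supported_in g u' v' -> v <= u' -> commute f g.
Proof.
  intros Hf Hg Sf Sg Hvu t.
  destruct (classic (u < t < v)) as [Ht|Ht].
  - assert (u < f t < v) by (apply incr_between; auto; apply Sf; lra).
    rewrite (Sg t), (Sg (f t)); auto; lra.
  - destruct (classic (u' < t < v')) as [Ht'|Ht'].
    + assert (u' < g t < v') by (apply incr_between; auto; apply Sg; lra).
      rewrite (Sf t), (Sf (g t)); auto; lra.
    + rewrite (Sf t), (Sg t); auto.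
Qed.

Lemma commute_preserves_support z bk u v : increasing z -> commute z bk ->
  supported_in bk u v -> (forall t, u < t < v -> bk t <> t) ->
  forall t, u < t < v -> u < z t < v.
Proof.
  intros Hz Hc Hb Hne t Ht. apply NNPP. intro Hout. apply (Hne t Ht).
  apply (incr_inj z); auto. rewrite Hc. apply Hb; auto.
Qed.

Lemma invariant_left_end f g u v : increasing f -> (forall t, f (g t) = t) ->
  (forall t, u < t < v -> u < g t < v) -> u < v -> f u <= u.
Proof.
  intros Hf Hfg Hg Huv. apply Rnot_lt_le. intro Hlt.
  set (s := (u + Rmin (f u) v) / 2).
  pose proof (Rmin_l (f u) v). pose proof (Rmin_r (f u) v).
  assert (u < Rmin (f u) v) by (apply Rmin_glb_lt; lra).
  destruct (Hg s) as [Hgs _]; [unfold s; lra|].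
  assert (Hfs := Hf _ _ Hgs). rewrite Hfg in Hfs. unfold s in Hfs. lra.
Qed.

Lemma commute_fixes_left_end x y bk u v : increasing x -> increasing y ->
  (forall t, y (x t) = t /\ x (y t) = t) -> commute x bk ->
  supported_in bk u v -> (forall t, u < t < v -> bk t <> t) -> u < v -> x u = u.
Proof.
  intros Hx Hy Hxy Hc Hb Hne Huv.
  assert (Cy : commute y bk).
  { intro t. rewrite <- (proj1 (Hxy (bk (y t)))), Hc, (proj2 (Hxy t)). auto. }
  assert (x u <= u).
  { apply (invariant_left_end x y u v); auto. intro t; apply Hxy.
    apply (commute_preserves_support y bk); auto. }
  assert (y u <= u).
  { apply (invariant_left_end y x u v); auto. intro t; apply Hxy.
    apply (commute_preserves_support x bk); auto. }
  assert (x (y u) <= x u) by (apply incr_le; auto). rewrite (proj2 (Hxy u)) in H1. lra.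
Qed.

Definition restr (u v : R) (f : R -> R) (t : R) : R :=
  if Rlt_dec u t then if Rlt_dec t v then f t else t else t.

Lemma restr_in u v f t : f u = u -> f v = v -> u <= t <= v -> restr u v f t = f t.
Proof.
  intros Hu Hv Ht. unfold restr.
  destruct (Rlt_dec u t); destruct (Rlt_dec t v); auto.
  - replace t with v by lra. auto.
  - replace t with u by lra. auto.
  - replace t with u by lra. auto.
Qed.

Lemma restr_out u v f t : ~ (u < t < v) -> restr u v f t = t.
Proof. intros Ht. unfold restr. destruct (Rlt_dec u t); destruct (Rlt_dec t v); auto. tauto. Qed.

Lemma restr_supported u v f : supported_in (restr u v f) u v.
Proof. intros t Ht. apply restr_out. auto. Qed.

Lemma restr_split f u w v t : increasing f -> f u = u -> f w = w -> f v = v -> u <= w <= v ->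
  restr u v f t = restr w v f (restr u w f t).
Proof.
  intros Hf Hu Hw Hv Huwv.
  destruct (classic (u < t < w)) as [Ht|Ht].
  - assert (u < f t < w) by (apply incr_between; auto).
    rewrite (restr_in u v), (restr_in u w), (restr_out w v) by (auto; lra). auto.
  - rewrite (restr_out u w) by auto.
    destruct (classic (w <= t <= v)) as [Ht'|Ht'].
    + rewrite !restr_in by (auto; lra). auto.
    + rewrite !restr_out by lra. auto.
Qed.

Section PiecewiseLinear.
Variables (r : R) (Lam A : R -> Prop).
Hypothesis r_pos : 0 < r.
Hypothesis Lam_pos : forall l, Lam l -> 0 < l.
Hypothesis Lam_1 : Lam 1.
Hypothesis Lam_mul : forall l m, Lam l -> Lam m -> Lam (l * m).
Hypothesis Lam_inv : forall l, Lam l -> Lam (/ l).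
Hypothesis A_0 : A 0.
Hypothesis A_add : forall x y, A x -> A y -> A (x + y).
Hypothesis A_opp : forall x, A x -> A (- x).
Hypothesis A_r : A r.
Hypothesis Lam_A : forall l x, Lam l -> A x -> A (l * x).

Definition affine_off (L : list R) (f : R -> R) : Prop :=
  forall u v, 0 <= u < v -> v <= r -> (forall q, In q L -> ~ (u < q < v)) ->
  exists l c, Lam l /\ A c /\ forall t, u <= t < v -> f t = l * t + c.

(* A description of F that is better suited to composition and inversion than
   the grid-based definition [inF]: increasing bijections of R that are the
   identity off [0,r) and locally affine off a finite set of points of A. *)
Definition PL (f : R -> R) : Prop :=
  (forall t, ~ I0r r t -> f t = t) /\ increasing f /\ (forall s, exists t, f t = s) /\
  exists L, Forall A L /\ affine_off L f.

Lemma free_right L t : t < r -> exists v, t < v <= r /\ forall q, In q L -> ~ (t < q < v).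
Proof.
  intro Ht. induction L as [|q L [v [Hv Hq]]].
  - exists r. split; [lra|]. intros q [].
  - destruct (Rlt_dec t q); [destruct (Rlt_dec q v)|].
    + exists q. split; [lra|]. intros q' [<-|Hi]; [lra|]. intro. apply (Hq q'); auto; lra.
    + exists v. split; [lra|]. intros q' [<-|Hi]; [lra|auto].
    + exists v. split; [lra|]. intros q' [<-|Hi]; [lra|auto].
Qed.

Lemma free_left L : exists u, 0 <= u < r /\ forall q, In q L -> ~ (u < q < r).
Proof.
  induction L as [|q L [u [Hu Hq]]].
  - exists 0. split; [lra|]. intros q [].
  - destruct (Rlt_dec u q); [destruct (Rlt_dec q r)|].
    + exists q. split; [lra|]. intros q' [<-|Hi]; [lra|]. intro. apply (Hq q'); auto; lra.
    + exists u. split; [lra|]. intros q' [<-|Hi]; [lra|auto].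
    + exists u. split; [lra|]. intros q' [<-|Hi]; [lra|auto].
Qed.

Lemma PL_ext f g : PL f -> (forall t, g t = f t) -> PL g.
Proof.
  intros (H1 & H2 & H3 & L & HL & HG) E. repeat split.
  - intros t Ht. rewrite E; auto.
  - intros s t Hst. rewrite !E; auto.
  - intro s. destruct (H3 s) as [t Ht]. exists t. rewrite E; auto.
  - exists L. split; auto. intros u v Hu Hv Hq.
    destruct (HG u v Hu Hv Hq) as (l & c & Hl & Hc & Hlc).
    exists l, c. repeat split; auto. intros. rewrite E; auto.
Qed.

Lemma PL_id : PL (fun t => t).
Proof.
  split; [|split; [|split]].
  - auto.
  - intros s t H. exact H.
  - intro s. exists s. auto.
  - exists nil. split; [constructor|]. intros u v _ _ _.
    exists 1, 0. repeat split; auto. intros; ring.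
Qed.

Lemma PL_fixes_0 f : PL f -> f 0 = 0.
Proof.
  intros (H1 & H2 & H3 & _).
  assert (0 <= f 0).
  { apply Rnot_lt_le. intro Hn. assert (Hff := H2 _ _ Hn).
    rewrite H1 in Hff; [lra|]. unfold I0r. lra. }
  destruct (H3 0) as [s Hs].
  destruct (Rlt_dec s 0).
  - rewrite H1 in Hs; [lra|]. unfold I0r. lra.
  - assert (f 0 <= f s) by (apply incr_le; auto; lra). lra.
Qed.

Lemma PL_fixes_r f : PL f -> f r = r.
Proof. intros [H1 _]. apply H1. unfold I0r. lra. Qed.

Lemma PL_maps_I0r f t : PL f -> I0r r t -> I0r r (f t).
Proof.
  intros Hf [Ht1 Ht2]. pose proof (PL_fixes_0 f Hf). pose proof (PL_fixes_r f Hf).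
  destruct Hf as (_ & H2 & _). split.
  - rewrite <- H. apply incr_le; auto.
  - rewrite <- H0. apply H2; auto.
Qed.

Lemma PL_A f t : PL f -> A t -> A (f t).
Proof.
  intros (H1 & _ & _ & L & _ & HG) At.
  destruct (classic (I0r r t)) as [[Ht1 Ht2]|Ht]; [|rewrite H1; auto].
  destruct (free_right L t Ht2) as [v [Hv Hq]].
  destruct (HG t v) as (l & c & Hl & Hc & E); try lra; auto.
  rewrite E by lra. auto.
Qed.

Lemma PL_inv f : PL f -> exists g, PL g /\ forall t, g (f t) = t /\ f (g t) = t.
Proof.
  intro Hf. pose proof Hf as (H1 & H2 & H3 & L & HL & HG).
  destruct (choice (fun s t => f t = s) H3) as [g fg].
  assert (gf : forall t, g (f t) = t) by (intro t; apply (incr_inj f); auto).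
  assert (gincr : increasing g).
  { intros s t Hst. apply (incr_lt_rev f); auto. rewrite !fg. auto. }
  assert (Hg_out : forall t, ~ I0r r t -> g t = t).
  { intros t Ht. rewrite <- (H1 t Ht) at 1. apply gf. }
  assert (Hg : PL g).
  { repeat split; auto.
    - intro s. exists (f s). auto.
    - exists (map f L). split.
      + apply Forall_forall. intros x Hx. apply in_map_iff in Hx as [q [<- Hq]].
        apply PL_A; auto. rewrite Forall_forall in HL; auto.
      + intros u v Hu Hv Hq.
        assert (g0 : g 0 = 0) by (rewrite <- (PL_fixes_0 f Hf) at 1; apply gf).
        assert (gr : g r = r) by (rewrite <- (PL_fixes_r f Hf) at 1; apply gf).
        assert (0 <= g u) by (rewrite <- g0; apply incr_le; auto; lra).
        assert (g u < g v) by (apply gincr; lra).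
        assert (g v <= r) by (rewrite <- gr; apply incr_le; auto).
        destruct (HG (g u) (g v)) as (l & c & Hl & Hc & E); try lra.
        { intros q Hin Hq'. apply (Hq (f q)); [apply in_map; auto|].
          rewrite <- (fg u), <- (fg v). split; apply H2; lra. }
        exists (/ l), (/ l * - c). repeat split; auto.
        intros t Ht. pose proof (Lam_pos l Hl).
        assert (Hgt : g u <= g t < g v) by (split; [apply incr_le|apply gincr]; auto; lra).
        specialize (E (g t) Hgt). rewrite fg in E. rewrite E at 2. field. lra. }
  exists g. split; auto.
Qed.

Lemma PL_comp f g : PL f -> PL g -> PL (fun t => g (f t)).
Proof.
  intros Hf Hg.
  destruct (PL_inv f Hf) as [fi [Hfi Efi]].
  pose proof (PL_fixes_0 f Hf) as f0. pose proof (PL_fixes_r f Hf) as fr.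
  destruct Hf as (H1 & H2 & H3 & L & HL & HG).
  destruct Hg as (K1 & K2 & K3 & M & HM & KG).
  repeat split.
  - intros t Ht. rewrite H1, K1; auto.
  - intros s t Hst. auto.
  - intro s. destruct (K3 s) as [t Ht]. destruct (H3 t) as [u Hu]. exists u. congruence.
  - exists (L ++ map fi M). split.
    + apply Forall_app. split; auto.
      apply Forall_forall. intros x Hx. apply in_map_iff in Hx as [q [<- Hq]].
      apply PL_A; auto. rewrite Forall_forall in HM; auto.
    + intros u v Hu Hv Hq.
      destruct (HG u v) as (l & c & Hl & Hc & E); try lra.
      { intros q Hin. apply Hq. apply in_or_app; auto. }
      assert (0 <= f u) by (rewrite <- f0; apply incr_le; auto; lra).
      assert (f v <= r) by (rewrite <- fr; apply incr_le; auto; lra).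
      destruct (KG (f u) (f v)) as (m & c' & Hm & Hc' & E'); try (split; auto; apply H2; lra); auto.
      { intros q Hin [Hq1 Hq2]. apply (Hq (fi q)).
        - apply in_or_app. right. apply in_map; auto.
        - destruct (Efi q) as [_ e]. rewrite <- e in Hq1, Hq2.
          split; apply (incr_lt_rev f); auto. }
      exists (m * l), (m * c + c'). repeat split; auto.
      intros t Ht.
      assert (f u <= f t < f v) by (split; [apply incr_le|apply H2]; auto; lra).
      rewrite E' by auto. rewrite E by auto. ring.
Qed.

Lemma inF_PL f : inF r Lam A f -> PL f.
Proof.
  intros (H1 & (g & Hh & Hcf & _) & n & p & lam & c & p0 & pn & pinc & pA & Hp).
  assert (Hg : grid r n p) by (repeat split; auto).
  assert (Hlam : forall i, (i < n)%nat -> 0 < lam i) by (intros i Hi; apply Lam_pos, (pA i Hi)).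
  assert (Hclosed : forall i t, (i < n)%nat -> p i <= t <= p (S i) -> t < r -> f t = lam i * t + c i).
  { intros i t Hi Ht Htr. destruct (Rlt_dec t (p (S i))); [apply Hp; auto; lra|].
    pose proof (grid_range r n p i Hg ltac:(lia)). pose proof (pinc i Hi).
    apply (cont_affine_right (I0r r) f (lam i) (c i) (p i) t Hcf); unfold I0r; try lra.
    intros s Hs. split; [lra|]. apply Hp; auto; lra. }
  assert (Hincr : increasing f).
  { intros s t Hst.
    destruct (classic (I0r r s)) as [Is|Is]; destruct (classic (I0r r t)) as [It|It].
    - destruct Is, It. apply (grid_affine_incr r n p lam c); auto; lra.
    - rewrite (H1 t) by auto. destruct (Hh s Is) as [[_ ?] _]. unfold I0r in *. lra.
    - rewrite (H1 s) by auto. destruct (Hh t It) as [[? _] _]. unfold I0r in *. lra.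
    - rewrite H1, (H1 t); auto. }
  repeat split; auto.
  - intro s. destruct (classic (I0r r s)) as [Is|Is].
    + exists (g s). apply Hh; auto.
    + exists s. auto.
  - exists (map p (seq 0 (S n))). split.
    + apply Forall_forall. intros x Hx. apply in_map_iff in Hx as [i [<- Hi]].
      apply in_seq in Hi. destruct (Nat.eq_dec i n) as [->|]; [rewrite pn; auto|apply pA; lia].
    + intros u v Hu Hv Hq.
      destruct (grid_locate r n p u Hg ltac:(lra)) as [i [Hi Hui]].
      destruct (pA i Hi) as (Api & Afpi & Hl).
      exists (lam i), (c i). split; [auto|split].
      * replace (c i) with (f (p i) + - (lam i * p i)) by (rewrite (Hp i) by (auto; lra); ring).
        auto.
      * intros t Ht. apply Hp; auto. split; [lra|].
        destruct (Rle_dec v (p (S i))); [lra|].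
        exfalso. apply (Hq (p (S i))); [|lra]. apply in_map, in_seq. lia.
Qed.

(* Conversely [PL] implies [inF]: the grid is any grid refining the breakpoints. *)
Lemma PL_inF f : PL f -> inF r Lam A f.
Proof.
  intro Hf. destruct (PL_inv f Hf) as [g [Hg Eg]].
  pose proof Hf as (H1 & H2 & H3 & L & HL & HG).
  split; [auto|split].
  - exists g. split; [|split; apply incr_surj_cont; apply Hf || apply Hg].
    intros t Ht. repeat split; try apply PL_maps_I0r; auto; apply Eg.
  - destruct (grid_refining r L r_pos) as (n & p & Hgrid & Hmem & Hcov).
    pose proof Hgrid as (p0 & pn & pinc).
    assert (Anode : forall i, (i <= n)%nat -> A (p i)).
    { intros i Hi. destruct (Hmem (p i)) as [E|[E|E]]; [exists i; auto|..].
      - rewrite E. auto.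
      - rewrite E. auto.
      - rewrite Forall_forall in HL. auto. }
    destruct (choice (fun i lc => (i < n)%nat -> Lam (fst lc) /\
                forall t, p i <= t < p (S i) -> f t = fst lc * t + snd lc)) as [lc Hlc].
    { intro i. destruct (Compare_dec.lt_dec i n) as [Hi|Hi]; [|exists (0, 0); intro; lia].
      pose proof (grid_range r n p i Hgrid ltac:(lia)).
      pose proof (grid_range r n p (S i) Hgrid ltac:(lia)). pose proof (pinc i Hi).
      destruct (HG (p i) (p (S i))) as (l & c & Hl & _ & Hc); try lra.
      - intros q Hq Hq'. destruct (Hcov q Hq) as [j [Hj <-]]; [lra|].
        destruct (Compare_dec.le_lt_dec j i).
        + assert (p j <= p i) by (apply (grid_le r n); auto; lia). lra.
        + assert (p (S i) <= p j) by (apply (grid_le r n); auto; lia). lra.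
      - exists (l, c). auto. }
    exists n, p, (fun i => fst (lc i)), (fun i => snd (lc i)).
    repeat split; auto.
    + apply Anode; lia.
    + apply PL_A; auto. apply Anode; lia.
    + apply Hlc; auto.
    + intros i t Hi Ht. apply Hlc; auto.
Qed.

Lemma PL_restr f u v : PL f -> 0 <= u < v -> v <= r -> A u -> A v -> f u = u -> f v = v ->
  PL (restr u v f).
Proof.
  intros Hf Huv Hvr Au Av fu fv.
  pose proof Hf as (H1 & H2 & H3 & L & HL & HG).
  repeat split.
  - intros t Ht. apply restr_out. unfold I0r in Ht. lra.
  - intros s t Hst.
    destruct (classic (u <= s <= v)) as [Is|Is]; destruct (classic (u <= t <= v)) as [It|It].
    + rewrite !restr_in; auto.
    + rewrite restr_in, restr_out by (auto; lra).
      assert (f s <= f v) by (apply incr_le; auto; lra). lra.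
    + rewrite restr_out, restr_in by (auto; lra).
      assert (f u <= f t) by (apply incr_le; auto; lra). lra.
    + rewrite !restr_out by lra. auto.
  - intro s. destruct (classic (u < s < v)) as [Is|Is].
    + destruct (H3 s) as [t Ht]. exists t. subst s.
      assert (u < t) by (apply (incr_lt_rev f); auto; lra).
      assert (t < v) by (apply (incr_lt_rev f); auto; lra).
      apply restr_in; auto; lra.
    + exists s. apply restr_out; auto.
  - exists (u :: v :: L). split; [repeat constructor; auto|].
    intros s t Hs Ht Hq.
    assert (Hu' := Hq u ltac:(simpl; auto)). assert (Hv' := Hq v ltac:(simpl; auto)).
    destruct (classic (u <= s /\ t <= v)) as [Hin|Hout].
    + destruct (HG s t) as (l & c & Hl & Hc & E); auto.
      { intros q Hq'. apply Hq. simpl; auto. }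
      exists l, c. repeat split; auto. intros x Hx. rewrite restr_in by (auto; lra). auto.
    + exists 1, 0. repeat split; auto. intros x Hx. rewrite restr_out by lra. ring.
Qed.

Section Powers.
Variables (a ai : R -> R).
Hypothesis a_ai : forall t, a (ai t) = t.
Hypothesis ai_a : forall t, ai (a t) = t.

Definition apow (k : Z) : R -> R :=
  match k with
  | Z0 => fun t => t
  | Zpos n => Nat.iter (Pos.to_nat n) a
  | Zneg n => Nat.iter (Pos.to_nat n) ai
  end.

Lemma Z_cases (k : Z) : (exists n, k = Z.of_nat n) \/ (exists n, k = (- Z.of_nat (S n))%Z).
Proof.
  destruct (Z_le_gt_dec 0 k); [left|right].
  - exists (Z.to_nat k). lia.
  - exists (Z.to_nat (- k - 1)). lia.
Qed.

Lemma apow_nat n t : apow (Z.of_nat n) t = Nat.iter n a t.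
Proof. destruct n; [reflexivity|]. simpl. now rewrite SuccNat2Pos.id_succ. Qed.

Lemma apow_negnat n t : apow (- Z.of_nat n) t = Nat.iter n ai t.
Proof. destruct n; [reflexivity|]. simpl. now rewrite SuccNat2Pos.id_succ. Qed.

Lemma apow_succ k t : apow (k + 1) t = a (apow k t).
Proof.
  destruct (Z_cases k) as [[n ->]|[n ->]].
  - replace (Z.of_nat n + 1)%Z with (Z.of_nat (S n)) by lia. now rewrite !apow_nat.
  - replace (- Z.of_nat (S n) + 1)%Z with (- Z.of_nat n)%Z by lia.
    rewrite !apow_negnat. simpl. now rewrite a_ai.
Qed.

Lemma apow_pred k t : apow (k - 1) t = ai (apow k t).
Proof. replace k with (k - 1 + 1)%Z at 2 by lia. now rewrite apow_succ, ai_a. Qed.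

Lemma apow_add k l t : apow (k + l) t = apow k (apow l t).
Proof.
  destruct (Z_cases k) as [[n ->]|[n ->]]; induction n as [|n IH].
  - reflexivity.
  - replace (Z.of_nat (S n) + l)%Z with (Z.of_nat n + l + 1)%Z by lia.
    replace (Z.of_nat (S n)) with (Z.of_nat n + 1)%Z by lia.
    now rewrite !apow_succ, IH.
  - replace (- Z.of_nat 1 + l)%Z with (0 + l - 1)%Z by lia.
    replace (- Z.of_nat 1)%Z with (0 - 1)%Z by lia. now rewrite !apow_pred.
  - replace (- Z.of_nat (S (S n)) + l)%Z with (- Z.of_nat (S n) + l - 1)%Z by lia.
    replace (- Z.of_nat (S (S n)))%Z with (- Z.of_nat (S n) - 1)%Z by lia.
    now rewrite !apow_pred, IH.
Qed.

Lemma apow_cancel k t : apow k (apow (- k) t) = t.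
Proof. rewrite <- apow_add. now replace (k + - k)%Z with 0%Z by lia. Qed.

Lemma apow_cancel' k t : apow (- k) (apow k t) = t.
Proof. rewrite <- apow_add. now replace (- k + k)%Z with 0%Z by lia. Qed.

(* Conjugation by a power of a: conjZ k f = a^{-k} f a^k in right-action
   notation, i.e. the copy of f transported by a^k. *)
Definition conjZ (k : Z) (f : R -> R) (t : R) : R := apow k (f (apow (- k) t)).

Lemma conjZ_conjZ j k f t : conjZ j (conjZ k f) t = conjZ (j + k) f t.
Proof.
  unfold conjZ. rewrite <- !apow_add. do 3 f_equal. lia.
Qed.

Lemma conjZ_back k f t : conjZ (- k) (conjZ k f) t = f t.
Proof. rewrite conjZ_conjZ. now replace (- k + k)%Z with 0%Z by lia. Qed.

Lemma conjZ_commute k f g : commute f g -> commute (conjZ k f) (conjZ k g).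
Proof. intros H t. unfold conjZ. now rewrite !apow_cancel', H. Qed.

Lemma conjset_conjZ f g : conjset a f g <-> exists k, forall t, g t = conjZ k f t.
Proof.
  split.
  - intros [n [H|H]].
    + exists (Z.of_nat n). intro t. unfold conjZ.
      rewrite <- (apow_cancel (Z.of_nat n) t) at 1. now rewrite apow_nat, H, <- apow_nat.
    + exists (- Z.of_nat n)%Z. intro t. unfold conjZ. rewrite Z.opp_involutive.
      now rewrite apow_nat, <- H, <- apow_nat, apow_cancel'.
  - intros [k Hk]. destruct (Z_cases k) as [[n ->]|[n ->]].
    + exists n. left. intro t. rewrite Hk. unfold conjZ. now rewrite <- !apow_nat, apow_cancel'.
    + exists (S n). right. intro t. rewrite Hk. unfold conjZ. rewrite Z.opp_involutive.
      now rewrite <- !apow_nat, apow_cancel.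
Qed.

Lemma gen_conjZ d k y : gen (fun z => z = d) y -> gen (conjset a d) (conjZ k y).
Proof.
  intro H. induction H as [|g Hg|g h Hg IHg Hh IHh|g h Hg IHg Hinv|g h Hg IHg Hext].
  - apply gen_ext with (g := fun t => t); [apply gen_id|]. intro t. apply apow_cancel.
  - subst. apply gen_base. apply conjset_conjZ. exists k. auto.
  - apply gen_ext with (g := fun t => conjZ k h (conjZ k g t)); [apply gen_mul; auto|].
    intro t. unfold conjZ. now rewrite apow_cancel'.
  - apply gen_inv with (g := conjZ k g); auto. intro t. unfold conjZ.
    now rewrite !apow_cancel', (proj1 (Hinv _)), (proj2 (Hinv _)), !apow_cancel.
  - apply gen_ext with (g := conjZ k g); auto. intro t. unfold conjZ. now rewrite Hext.
Qed.

Hypothesis PL_a : PL a.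
Hypothesis PL_ai : PL ai.

Lemma PL_apow k : PL (apow k).
Proof.
  assert (Hiter : forall f n, PL f -> PL (Nat.iter n f)).
  { intros f n Hf. induction n as [|n IH]; [apply PL_id|].
    apply PL_ext with (f := fun t => f (Nat.iter n f t)); [apply PL_comp|]; auto. }
  destruct (Z_cases k) as [[n ->]|[n ->]].
  - apply PL_ext with (f := Nat.iter n a); [auto|intro; apply apow_nat].
  - apply PL_ext with (f := Nat.iter (S n) ai); [auto|intro; apply apow_negnat].
Qed.

Lemma apow_incr k : increasing (apow k).
Proof. apply PL_apow. Qed.

Lemma PL_conjZ k f : PL f -> PL (conjZ k f).
Proof.
  intro Hf. apply (PL_comp (fun t => f (apow (- k) t))); [apply PL_comp|]; auto using PL_apow.
Qed.

Lemma conjZ_supported k f u v :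
  supported_in f u v -> supported_in (conjZ k f) (apow k u) (apow k v).
Proof.
  intros Hf t Ht. unfold conjZ. rewrite Hf; [apply apow_cancel|].
  intros [h1 h2]. apply Ht. rewrite <- (apow_cancel k t). split; apply apow_incr; auto.
Qed.

Section Orbit.
Variable alpha0 : R.
Hypothesis a_up : forall t, 0 < t < r -> t < a t.
Hypothesis alpha0_in : 0 < alpha0 < r.
Hypothesis A_alpha0 : A alpha0.

Definition alpha (k : Z) : R := apow k alpha0.

Lemma alpha_conj k j : apow k (alpha j) = alpha (k + j).
Proof. unfold alpha. now rewrite apow_add. Qed.

Lemma alpha_succ k : alpha (k + 1) = a (alpha k).
Proof. apply apow_succ. Qed.

Lemma alpha_in k : 0 < alpha k < r.
Proof.
  pose proof (PL_maps_I0r (apow k) alpha0 (PL_apow k) ltac:(unfold I0r; lra)) as [_ ?].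
  split; [|auto]. rewrite <- (PL_fixes_0 (apow k) (PL_apow k)). apply apow_incr. lra.
Qed.

Lemma alpha_A k : A (alpha k).
Proof. apply PL_A; auto. apply PL_apow. Qed.

Lemma alpha_lt k : alpha k < alpha (k + 1).
Proof. rewrite alpha_succ. apply a_up, alpha_in. Qed.

Lemma alpha_incr k l : (k < l)%Z -> alpha k < alpha l.
Proof.
  intro H. replace l with (k + Z.of_nat (S (Z.to_nat (l - k - 1))))%Z by lia.
  induction (Z.to_nat (l - k - 1)) as [|n IH].
  - apply alpha_lt.
  - replace (k + Z.of_nat (S (S n)))%Z with (k + Z.of_nat (S n) + 1)%Z by lia.
    pose proof (alpha_lt (k + Z.of_nat (S n))). lra.
Qed.

Lemma alpha_le k l : (k <= l)%Z -> alpha k <= alpha l.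
Proof. intro H. destruct (Z.eq_dec k l) as [->|]; [lra|]. left; apply alpha_incr; lia. Qed.

Lemma alpha_low e : 0 < e -> exists k, alpha k < e.
Proof.
  intro He.
  destruct (orbit_drops_below a (fun n => alpha (- Z.of_nat n)) e) as [n Hn]; eauto.
  - apply PL_a.
  - intro n. rewrite <- alpha_succ. f_equal. lia.
  - intros t Ht. apply a_up. unfold alpha in Ht. simpl in Ht. lra.
Qed.

Lemma alpha_high e : 0 < e -> exists k, r - e < alpha k.
Proof.
  intro He.
  destruct (orbit_drops_below (fun t => - ai (- t)) (fun n => - alpha (Z.of_nat n)) (e - r))
    as [n Hn]; [| |intros t Ht|exists (Z.of_nat n); lra].
  - intros s t Hst. apply Ropp_lt_contravar, PL_ai. lra.
  - intro n. rewrite Ropp_involutive. f_equal.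
    replace (Z.of_nat (S n)) with (Z.of_nat n + 1)%Z by lia. now rewrite alpha_succ, ai_a.
  - unfold alpha in Ht. simpl in Ht.
    assert (Hs : I0r r (ai (- t))) by (apply PL_maps_I0r; auto; unfold I0r; lra).
    assert (ai (- t) <> 0).
    { intro E. rewrite <- (PL_fixes_0 ai PL_ai) in E. apply (incr_inj ai) in E; [lra|apply PL_ai]. }
    assert (Hup := a_up (ai (- t))). rewrite a_ai in Hup. destruct Hs. lra.
Qed.

Section Centralizer.
Variables b d : R -> R.
Hypothesis PL_b : PL b.
Hypothesis b_supported : supported_in b alpha0 (a alpha0).
Hypothesis b_moves : forall t, alpha0 < t < a alpha0 -> b t <> t.
Hypothesis d_generates : forall x,
  (inF r Lam A x /\ (forall t, supp r x t -> alpha0 < t < a alpha0) /\ commute x b)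
  <-> gen (fun y => y = d) x.

Lemma conj_b_supported k : supported_in (conjZ k b) (alpha k) (alpha (k + 1)).
Proof.
  rewrite <- (alpha_conj k 1). apply conjZ_supported. exact b_supported.
Qed.

Lemma conj_b_moves k t : alpha k < t < alpha (k + 1) -> conjZ k b t <> t.
Proof.
  intros Ht E. apply (b_moves (apow (- k) t)).
  - assert (E1 : a alpha0 = apow (- k) (alpha (k + 1))).
    { rewrite alpha_conj. now replace (- k + (k + 1))%Z with 1%Z by lia. }
    assert (E0 : alpha0 = apow (- k) (alpha k)).
    { rewrite alpha_conj. now replace (- k + k)%Z with 0%Z by lia. }
    rewrite E1, E0. split; apply apow_incr; lra.
  - apply (incr_inj (apow k)); [apply apow_incr|].
    unfold conjZ in E. rewrite E. symmetry. apply apow_cancel.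
Qed.

Lemma d_props : PL d /\ supported_in d alpha0 (a alpha0) /\ commute d b.
Proof.
  destruct (proj2 (d_generates d) (gen_base _ d eq_refl)) as (Fd & Sd & Cdb).
  split; [apply inF_PL; auto|split; [|auto]].
  intros t Ht. destruct (classic (I0r r t)) as [It|It]; [|apply Fd; auto].
  apply NNPP. intro Hn. apply Ht. apply Sd. split; auto.
Qed.

(* Every conjugate of d commutes with every conjugate of b: equal exponents
   by conjugating [commute d b], distinct ones by disjointness of supports. *)
Lemma conj_d_commutes_conj_b j k : commute (conjZ j d) (conjZ k b).
Proof.
  destruct d_props as (PL_d & Sd & Cdb).
  assert (Sdj : supported_in (conjZ j d) (alpha j) (alpha (j + 1))).
  { rewrite <- (alpha_conj j 1). apply conjZ_supported. exact Sd. }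
  assert (Ij : increasing (conjZ j d)) by (apply PL_conjZ; auto).
  assert (Ik : increasing (conjZ k b)) by (apply PL_conjZ; auto).
  destruct (Z.lt_total j k) as [hjk|[<-|hjk]].
  - apply (disjoint_support_commute _ _ (alpha j) (alpha (j + 1)) (alpha k) (alpha (k + 1)));
      auto using conj_b_supported. apply alpha_le. lia.
  - apply conjZ_commute. auto.
  - intro t. symmetry.
    apply (disjoint_support_commute _ _ (alpha k) (alpha (k + 1)) (alpha j) (alpha (j + 1)));
      auto using conj_b_supported. apply alpha_le. lia.
Qed.

Lemma gen_centralizes x : gen (conjset a d) x -> PL x /\ forall k, commute x (conjZ k b).
Proof.
  destruct d_props as (PL_d & _).
  intro H. induction H as [|g Hg|g h Hg IHg Hh IHh|g h Hg IHg Hinv|g h Hg IHg Hext].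
  - split; [apply PL_id|]. intros k t. auto.
  - apply conjset_conjZ in Hg as [j Hj]. split.
    + apply PL_ext with (f := conjZ j d); auto. apply PL_conjZ; auto.
    + intros k t. rewrite !Hj. apply conj_d_commutes_conj_b.
  - destruct IHg as [G1 C1], IHh as [G2 C2]. split; [apply PL_comp; auto|].
    intros k t. now rewrite C1, C2.
  - destruct IHg as [G1 C1]. destruct (PL_inv g G1) as [g' [G' E']]. split.
    + apply PL_ext with (f := g'); auto. intro t.
      rewrite <- (proj2 (Hinv t)) at 2. now rewrite (proj1 (E' (h t))).
    + intros k t. rewrite <- (proj2 (Hinv t)) at 1. rewrite <- C1. apply Hinv.
  - destruct IHg as [G1 C1]. split; [apply PL_ext with (f := g); auto|].
    intros k t. rewrite !Hext. apply C1.
Qed.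

Section CentralizerElement.
Variable x : R -> R.
Hypothesis PL_x : PL x.
Hypothesis x_centralizes : forall k, commute x (conjZ k b).

Lemma centralizer_fixes_orbit k : x (alpha k) = alpha k.
Proof.
  destruct (PL_inv x PL_x) as [y [PL_y Exy]].
  apply (commute_fixes_left_end x y (conjZ k b) (alpha k) (alpha (k + 1)));
    [apply PL_x|apply PL_y|apply Exy|apply x_centralizes|apply conj_b_supported|
     apply conj_b_moves|apply alpha_lt].
Qed.

(* The restriction of x to [alpha k, alpha (k+1)] is a conjugate of an
   element of the centralizer of b in F_(alpha0, alpha1), hence lies in the
   subgroup generated by the conjugates of d. *)
Lemma centralizer_piece k : gen (conjset a d) (restr (alpha k) (alpha (k + 1)) x).
Proof.
  set (xk := restr (alpha k) (alpha (k + 1)) x).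
  assert (PL_xk : PL xk).
  { pose proof (alpha_in k). pose proof (alpha_in (k + 1)). pose proof (alpha_lt k).
    apply PL_restr; auto using alpha_A, centralizer_fixes_orbit; lra. }
  assert (Cxk : commute xk (conjZ k b)).
  { intro t. pose proof (conj_b_supported k) as Sk.
    destruct (classic (alpha k < t < alpha (k + 1))) as [Ht|Ht].
    - assert (alpha k < conjZ k b t < alpha (k + 1)).
      { apply incr_between; auto; [apply PL_conjZ; auto|apply Sk; lra..]. }
      unfold xk. rewrite !restr_in by (auto using centralizer_fixes_orbit; lra).
      apply x_centralizes.
    - unfold xk. rewrite (Sk t Ht), restr_out by auto. symmetry. apply Sk. auto. }
  assert (Hyk : gen (fun z => z = d) (conjZ (- k) xk)).
  { apply d_generates. split; [|split].
    - apply PL_inF. apply PL_conjZ. auto.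
    - intros t [_ Hne]. apply NNPP. intro Hn. apply Hne.
      pose proof (conjZ_supported (- k) _ _ _ (restr_supported (alpha k) (alpha (k + 1)) x)) as S.
      rewrite !alpha_conj in S. replace (- k + k)%Z with 0%Z in S by lia.
      replace (- k + (k + 1))%Z with 1%Z in S by lia. apply S. auto.
    - intro t. pose proof (conjZ_commute (- k) _ _ Cxk t) as C.
      now rewrite !conjZ_back in C. }
  apply gen_ext with (g := conjZ k (conjZ (- k) xk)); [apply gen_conjZ; auto|].
  intro t. rewrite conjZ_conjZ. now replace (k + - k)%Z with 0%Z by lia.
Qed.

Lemma centralizer_restr_gen k0 j :
  gen (conjset a d) (restr (alpha k0) (alpha (k0 + Z.of_nat j)) x).
Proof.
  induction j as [|j IH].
  - apply gen_ext with (g := fun t => t); [apply gen_id|].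
    intro t. apply restr_out. replace (k0 + Z.of_nat 0)%Z with k0 by lia. lra.
  - replace (k0 + Z.of_nat (S j))%Z with (k0 + Z.of_nat j + 1)%Z by lia.
    apply gen_ext with (g := fun t => restr (alpha (k0 + Z.of_nat j)) (alpha (k0 + Z.of_nat j + 1)) x
                                      (restr (alpha k0) (alpha (k0 + Z.of_nat j)) x t)).
    + apply gen_mul; [apply IH|apply centralizer_piece].
    + intro t. apply restr_split; [apply PL_x|apply centralizer_fixes_orbit..|].
      split; apply alpha_le; lia.
Qed.

(* Being affine near 0 and near r with infinitely many fixed points there,
   x is the identity near both ends. *)
Lemma centralizer_trivial_near_ends : exists k0 K, (k0 <= K)%Z /\
  (forall t, 0 <= t <= alpha k0 -> x t = t) /\ (forall t, alpha K <= t < r -> x t = t).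
Proof.
  pose proof PL_x as (_ & _ & _ & L & _ & Haff).
  destruct (free_right L 0 r_pos) as [v0 [Hv0 Hq0]].
  destruct (Haff 0 v0) as (l0 & c0 & _ & _ & E0); try lra; auto.
  destruct (alpha_low v0 ltac:(lra)) as [k0 Hk0].
  destruct (free_left L) as [u0 [Hu0 Hqr]].
  destruct (Haff u0 r) as (l1 & c1 & _ & _ & E1); try lra; auto.
  destruct (alpha_high (r - u0) ltac:(lra)) as [K HK].
  set (K' := Z.max K k0).
  assert (alpha K <= alpha K') by (apply alpha_le; lia).
  assert (alpha (k0 - 1) < alpha k0) by (apply alpha_incr; lia).
  assert (alpha K' < alpha (K' + 1)) by apply alpha_lt.
  pose proof (alpha_in (k0 - 1)). pose proof (alpha_in (K' + 1)).
  exists k0, K'. split; [lia|split].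
  - intros t Ht. apply (affine_two_fixed x l0 c0 0 v0 (alpha (k0 - 1)) (alpha k0));
      auto using centralizer_fixes_orbit; lra.
  - intros t Ht. apply (affine_two_fixed x l1 c1 u0 r (alpha K') (alpha (K' + 1)));
      auto using centralizer_fixes_orbit; lra.
Qed.

(* Hence x is the restriction of itself to [alpha k0, alpha K], a finite
   product of pieces. *)
Lemma centralizer_in_gen : gen (conjset a d) x.
Proof.
  destruct centralizer_trivial_near_ends as (k0 & K & HkK & Id0 & Idr).
  pose proof (centralizer_restr_gen k0 (Z.to_nat (K - k0))) as Hgen.
  replace (k0 + Z.of_nat (Z.to_nat (K - k0)))%Z with K in Hgen by lia.
  apply (gen_ext _ _ _ Hgen). intro t.
  destruct (classic (alpha k0 < t < alpha K)) as [Ht|Ht].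
  - symmetry. apply restr_in; auto using centralizer_fixes_orbit; lra.
  - rewrite restr_out by auto. destruct (classic (I0r r t)) as [[Ht1 Ht2]|Ht'].
    + destruct (Rle_dec t (alpha k0)); [apply Id0|apply Idr]; lra.
    + apply PL_x. auto.
Qed.

End CentralizerElement.

Theorem centralizer_iff x :
  (inF r Lam A x /\ (forall g, conjset a b g -> commute x g)) <-> gen (conjset a d) x.
Proof.
  split.
  - intros [Fx Cx]. apply centralizer_in_gen; [apply inF_PL; auto|].
    intro k. apply Cx. apply conjset_conjZ. exists k. auto.
  - intro H. destruct (gen_centralizes x H) as [Gx Cx]. split; [apply PL_inF; auto|].
    intros g Hg. apply conjset_conjZ in Hg as [k Hk]. intro t. rewrite !Hk. apply Cx.
Qed.

End Centralizer.

End Orbit.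
End Powers.
End PiecewiseLinear.

Lemma supp_interval r Lam A f u v : inF r Lam A f -> (forall t, supp r f t <-> u < t < v) ->
  supported_in f u v /\ forall t, u < t < v -> f t <> t.
Proof.
  intros [Hout _] Hs. split.
  - intros t Ht. destruct (classic (I0r r t)) as [It|It]; [|auto].
    apply NNPP. intro Hn. apply Ht, Hs. split; auto.
  - intros t Ht. apply (proj2 (Hs t) Ht).
Qed.

Theorem lemma4p6 (r : R) (Lam A : R -> Prop) (a b d : R -> R) (alpha0 : R) :
  admissible r Lam A ->
  inFup r Lam A a ->
  (forall t, supp r a t <-> 0 < t < r) ->
  0 < alpha0 < r -> A alpha0 ->
  inFup r Lam A b ->
  (forall t, supp r b t <-> alpha0 < t < a alpha0) ->
  (* d generates the centralizer of b in F_{(alpha0, alpha1)}, alpha1 = (alpha0)a *)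
  (forall x, (inF r Lam A x /\ (forall t, supp r x t -> alpha0 < t < a alpha0)
              /\ commute x b)
             <-> gen (fun y => y = d) x) ->
  forall x,
    (inF r Lam A x /\ (forall g, conjset a b g -> commute x g))
    <-> gen (conjset a d) x.
Proof.
  intros (r_pos & Lam_pos & Lam_1 & Lam_mul & Lam_inv & _ & A_0 & A_add & A_opp & A_r & Lam_A)
    [Fa a_ge] Sa alpha0_in A_alpha0 [Fb _] Sb d_generates.
  assert (PL_a : PL r Lam A a) by (apply inF_PL; auto).
  destruct (PL_inv r Lam A) with (f := a) as [ai [PL_ai Eai]]; auto.
  assert (a_up : forall t, 0 < t < r -> t < a t).
  { intros t Ht. destruct (supp_interval r Lam A a 0 r Fa Sa) as [_ Ha].
    pose proof (a_ge t ltac:(unfold I0r; lra)). pose proof (Ha t Ht). lra. }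
  destruct (supp_interval r Lam A b alpha0 (a alpha0) Fb Sb) as [b_supported b_moves].
  apply (centralizer_iff r Lam A r_pos Lam_pos Lam_1 Lam_mul Lam_inv A_0 A_add A_opp A_r Lam_A
           a ai (fun t => proj2 (Eai t)) (fun t => proj1 (Eai t)) PL_a PL_ai alpha0 a_up
           alpha0_in A_alpha0 b d); auto.
  apply inF_PL; auto.
Qed.
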